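(* Let $M$ be a non-quasianalytic weight sequence and $M'$ a positive sequence. If $M'\prec_{SV}M$, then $M'^{[n]}\prec_{SV}M^{[4n]}$ for all positive integers $n$.
   Context: A weight sequence is $M=(M_k)_{k\ge0}$ with $M_k=\mu_0\cdots\mu_k$, $1=\mu_0\le\mu_1\le\cdots$, $\mu_k\to\infty$; non-quasianalytic if $\sum1/\mu_k<\infty$. For a positive sequence $N$ and $n\in\mathbb{N}_{\ge1}$, $N^{[n]}_j:=N_{nj}^{1/n}$ (for a non-quasianalytic weight sequence $M$, $M^{[n]}$ is again one, with quotients $\mu^{[n]}_j=(\mu_{n(j-1)+1}\cdots\mu_{nj})^{1/n}$). For a positive sequence $M'$ and a non-quasianalytic weight sequence $M$, $M'\prec_{SV}M$ means: $\exists s\in\mathbb{N}_{\ge1}$ with $\sup_{j\ge1}\frac1j\sup_{0\le i<j}(M'_j/(s^jM_i))^{1/(j-i)}\sum_{k\ge j}1/\mu_k<\infty$. *)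

From mathcomp Require Import all_boot all_order all_algebra.
From mathcomp Require Import all_classical all_reals all_analysis.
Set Implicit Arguments. Unset Strict Implicit. Unset Printing Implicit Defensive.
Import Order.TTheory GRing.Theory Num.Theory.
Local Open Scope classical_set_scope.
Local Open Scope ring_scope.

Definition quot (R : realType) (M : nat -> R) (k : nat) : R :=
  if k is k'.+1 then M k'.+1 / M k' else 1.

Definition weight_sequence (R : realType) (M : nat -> R) : Prop :=
  M 0%N = 1 /\ (forall k, 0 < M k) /\
  (forall k, quot M k <= quot M k.+1) /\
  (quot M @ \oo --> +oo).

Definition non_quasianalytic (R : realType) (M : nat -> R) : Prop :=
  weight_sequence M /\
  (\sum_(0 <= k <oo) ((quot M k)^-1)%:E < +oo)%E.

Definition root_seq (R : realType) (n : nat) (N : nat -> R) : nat -> R :=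
  fun j => N (n * j)%N `^ (n%:R^-1).

Definition SV_rel (R : realType) (M' M : nat -> R) : Prop :=
  exists s : nat, (1 <= s)%N /\ exists C : R, forall j : nat, (1 <= j)%N ->
    (((j%:R^-1 * \big[Num.max/0]_(i < j)
        ((M' j / (s%:R ^+ j * M i)) `^ ((j - i)%:R^-1)))%:E)
      * \sum_(j <= k <oo) ((quot M k)^-1)%:E <= C%:E)%E.

(* They give M_p^4 <= M_{4p}, and mu^[4n]_{k+1} >= mu_{4nk+1}.  The first
   bound makes the (i, j)-term of M'^[n] against M^[4n] at most the
   (ni, nj)-term of M' against M, so the prefactor of M'^[n] at j is at most
   n times the prefactor of M' at nj.  By the second bound, for k >= 2 the
   term 1/mu^[4n]_k is at most each of the n terms 1/mu_l, nk <= l < n(k+1);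
   grouping the tail sum of 1/mu from nj into these blocks shows that the
   tail sum of 1/mu^[4n] from j is at most 1/n times it, up to the term
   k = 1, which is at most 1 and only occurs for j = 1.  Multiplying, the
   bound C for M' gives C plus the value of the prefactor at j = 1. *)

From mathcomp Require Import all_boot all_order all_algebra.
From mathcomp Require Import all_classical all_reals all_analysis.
From mathcomp Require Import lra zify ring.
Import Order.TTheory GRing.Theory Num.Theory.
Local Open Scope ring_scope.

Lemma big_nat_blocks {V : nmodType} (F : nat -> V) n j K : (j <= K)%N ->
  \sum_(j <= k < K) \sum_(n * k <= l < n * k.+1) F l =
  \sum_(n * j <= l < n * K) F l.
Proof.
elim: K => [|K IHK]; first by rewrite leqn0 => /eqP ->; rewrite !big_geq.
rewrite leq_eqVlt => /predU1P[->|]; first by rewrite !big_geq.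
rewrite ltnS => jK; rewrite big_nat_recr //= IHK //.
by rewrite -big_cat_nat ?leq_mul2l ?jK ?leqnSn ?orbT.
Qed.

Lemma nneseries_le_ub {R : realType} (u : nat -> \bar R) j (x : \bar R) :
  (forall k, (j <= k)%N -> 0 <= u k)%E ->
  (forall K, \sum_(j <= k < K) u k <= x)%E -> (\sum_(j <= k <oo) u k <= x)%E.
Proof.
move=> u_ge0 ub; apply: lime_le; first exact: is_cvg_ereal_nneg_natsum.
exact: nearW.
Qed.

Lemma powR_root_ratio_le {R : realType} (a b c t : R) (n d : nat) :
  0 < a -> 0 < c -> 0 < t -> c ^+ 4 <= b -> (0 < n)%N -> (0 < d)%N ->
  (a `^ n%:R^-1 / (t * b `^ (4 * n)%:R^-1)) `^ d%:R^-1 <=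
  (a / (t ^+ n * c)) `^ (n * d)%:R^-1.
Proof.
move=> a_gt0 c_gt0 t_gt0 cb n_gt0 d_gt0.
have b_gt0 : 0 < b := lt_le_trans (exprn_gt0 4 c_gt0) cb.
have lcb : ln c * 4%:R <= ln b by rewrite mulr_natr -lnXn // ler_ln ?posrE ?exprn_gt0.
have [an_gt0 bn_gt0] : 0 < a `^ n%:R^-1 /\ 0 < b `^ (4 * n)%:R^-1 by rewrite !powR_gt0.
have tn_gt0 : 0 < t ^+ n by rewrite exprn_gt0.
rewrite -ler_ln ?posrE ?powR_gt0 ?divr_gt0 ?mulr_gt0 //.
rewrite !ln_powR !ln_div ?posrE ?mulr_gt0 // !lnM ?posrE // !ln_powR lnXn //.
rewrite -mulr_natr !natrM -subr_ge0; set e := (X in 0 <= X).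
have -> : e = (ln b - ln c * 4%:R) / (4%:R * n%:R * d%:R).
  by rewrite /e; field; rewrite !pnatr_eq0 -!lt0n n_gt0 d_gt0.
by rewrite divr_ge0 ?subr_ge0 ?mulr_ge0.
Qed.

Section WeightSequence.
Context {R : realType} {M : nat -> R}.
Hypotheses (M0 : M 0%N = 1) (M_gt0 : forall k, 0 < M k)
  (quot_leS : forall k, quot M k <= quot M k.+1).

Lemma quot_le : {homo quot M : a b / (a <= b)%N >-> a <= b}.
Proof. by apply: homo_leq => // a b c; apply: le_trans. Qed.

Lemma quot_ge1 k : 1 <= quot M k.
Proof. exact: (@quot_le 0). Qed.

Lemma quot_gt0 k : 0 < quot M k.
Proof. exact: lt_le_trans ltr01 (quot_ge1 k). Qed.

Lemma quot_ge0 k : 0 <= quot M k.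
Proof. exact/ltW/quot_gt0. Qed.

Lemma M_quotS k : M k.+1 = M k * quot M k.+1.
Proof. by rewrite /= mulrC divfK // gt_eqF. Qed.

Lemma M_mul_quotX_le p q : M p * quot M p.+1 ^+ q <= M (p + q).
Proof.
elim: q => [|q IHq]; first by rewrite mulr1 addn0.
rewrite addnS (M_quotS (p + q)) exprSr mulrA.
apply: ler_pM => //; first by rewrite mulr_ge0 ?exprn_ge0 ?quot_ge0 ?ltW.
  exact: quot_ge0.
by apply: quot_le; rewrite ltnS leq_addr.
Qed.

Lemma M_le_quotX p : M p <= quot M p ^+ p.
Proof.
elim: p => [|p IHp]; first by rewrite M0.
rewrite (M_quotS p) exprSr; apply: ler_pM; rewrite ?quot_ge0 ?(ltW (M_gt0 _)) //.
by apply: le_trans IHp _; rewrite lerXn2r ?nnegrE ?quot_ge0.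
Qed.

Lemma M_mul_le p q : M p * M q <= M (p + q).
Proof.
wlog qp : p q / (q <= p)%N.
  by move=> le; case: (leqP q p) => [/le //|/ltnW/le]; rewrite mulrC addnC.
apply: le_trans (M_mul_quotX_le p q); rewrite ler_pM2l //.
apply: le_trans (M_le_quotX q) _.
by rewrite lerXn2r ?nnegrE ?quot_ge0 //; apply: quot_le; apply: leqW.
Qed.

Lemma M_expn_le m p : M p ^+ m <= M (m * p).
Proof.
elim: m => [|m IHm]; first by rewrite M0.
by rewrite exprS mulSn; apply: le_trans (M_mul_le _ _); rewrite ler_pM2l.
Qed.

Lemma quot_root_seqS_ge {m} k : (0 < m)%N ->
  quot M (m * k).+1 <= quot (root_seq m M) k.+1.
Proof.
move=> m_gt0; rewrite [in X in _ <= X]/= /root_seq.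
have M_mk := M_gt0 (m * k); have M_mkS := M_gt0 (m * k.+1).
have q_gt0 := quot_gt0 (m * k).+1.
have := M_mul_quotX_le (m * k) m; rewrite addnC -mulnS.
rewrite -ler_ln ?posrE ?mulr_gt0 ?exprn_gt0 // lnM ?posrE ?exprn_gt0 // lnXn //.
move=> le_ln; rewrite -mulr_natr in le_ln.
rewrite -ler_ln ?posrE ?divr_gt0 ?powR_gt0 // ln_div ?posrE ?powR_gt0 // !ln_powR.
rewrite -mulrBr ler_pdivlMl ?ltr0n //; lra.
Qed.

Lemma quot_root_seq_ge1 {m} k : (0 < m)%N -> 1 <= quot (root_seq m M) k.
Proof.
case: k => [|k] m_gt0 //.
exact: le_trans (quot_ge1 _) (quot_root_seqS_ge k m_gt0).
Qed.

Lemma inv_quot_root_seq_le n k l : (0 < n)%N -> (2 <= k)%N -> (l < n * k.+1)%N ->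
  (quot (root_seq (4 * n) M) k)^-1 <= (quot M l)^-1.
Proof.
move=> n_gt0 k_ge2 lk; have n4_gt0 : (0 < 4 * n)%N by rewrite muln_gt0.
have q_gt0 := lt_le_trans ltr01 (quot_root_seq_ge1 k n4_gt0).
rewrite lef_pV2 ?posrE ?quot_gt0 //.
case: k k_ge2 lk q_gt0 => [//|k] k_ge2 lk _.
(* l < n (k + 1) <= 4 n (k - 1) + 1, as k >= 2 *)
by apply: le_trans (quot_root_seqS_ge k n4_gt0); apply: quot_le; nia.
Qed.

Lemma inv_quot_root_seq_le_block n k : (0 < n)%N -> (1 <= k)%N ->
  (quot (root_seq (4 * n) M) k)^-1 <=
  (k == 1)%:R + n%:R^-1 * \sum_(n * k <= l < n * k.+1) (quot M l)^-1.
Proof.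
move=> n_gt0; rewrite leq_eqVlt => /predU1P[<-|k_ge2].
  have q_ge1 : 1 <= quot (root_seq (4 * n) M) 1 by rewrite quot_root_seq_ge1 ?muln_gt0.
  rewrite eqxx -[X in X <= _]addr0 lerD ?invf_le1 ?(lt_le_trans ltr01 q_ge1) //.
  by rewrite mulr_ge0 ?invr_ge0 ?sumr_ge0 // => l _; rewrite invr_ge0 quot_ge0.
rewrite gtn_eqF // add0r ler_pdivlMl ?ltr0n //.
rewrite -[n in n%:R * _](addnK (n * k)) -mulnS mulr_natl -sumr_const_nat.
by apply: ler_sum_nat => l /andP[_ lk]; apply: inv_quot_root_seq_le.
Qed.

Lemma sum_inv_quot_root_seq_le n j K : (0 < n)%N -> (1 <= j)%N ->
  \sum_(j <= k < K) (quot (root_seq (4 * n) M) k)^-1 <=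
  (j == 1)%:R + n%:R^-1 * \sum_(n * j <= l < n * K) (quot M l)^-1.
Proof.
move=> n_gt0 j_ge1; have [Kj|jK] := leqP K j.
  by rewrite !big_geq ?leq_mul2l ?Kj ?orbT // mulr0 addr0.
have one_le : \sum_(j <= k < K) (k == 1)%:R <= (j == 1)%:R :> R.
  have [j_gt1|j_le1] := ltnP 1 j.
    rewrite big_nat_cond big1 // => k /andP[/andP[jk _] _].
    by rewrite gtn_eqF // (leq_trans j_gt1 jk).
  have j1 : j = 1%N by lia.
  subst j; rewrite big_ltn // eqxx big_nat_cond big1 ?addr0 // => k /andP[/andP[k_gt1 _] _].
  by rewrite gtn_eqF.
rewrite -(big_nat_blocks (fun l => (quot M l)^-1) n j K (ltnW jK)) mulr_sumr.
apply: le_trans (lerD one_le (lexx _)); rewrite -big_split /=.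
apply: ler_sum_nat => k /andP[jk _].
by apply: inv_quot_root_seq_le_block => //; apply: leq_trans jk.
Qed.

Lemma inv_quot_tail_root_seq_le n j : (0 < n)%N -> (1 <= j)%N ->
  (\sum_(j <= k <oo) ((quot (root_seq (4 * n) M) k)^-1)%:E <=
   ((j == 1)%:R)%:E + (n%:R^-1)%:E * \sum_(n * j <= l <oo) ((quot M l)^-1)%:E)%E.
Proof.
move=> n_gt0 j_ge1; apply: nneseries_le_ub => [k _|K].
  by rewrite lee_fin invr_ge0 (le_trans ler01) ?quot_root_seq_ge1 ?muln_gt0.
rewrite sumEFin; apply: (@le_trans _ _
  ((j == 1)%:R + n%:R^-1 * \sum_(n * j <= l < n * K) (quot M l)^-1)%:E).
  by rewrite lee_fin sum_inv_quot_root_seq_le.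
rewrite EFinD EFinM leeD2l // lee_wpmul2l ?lee_fin ?invr_ge0 // -sumEFin.
by apply: nneseries_lim_ge => l _ _; rewrite lee_fin invr_ge0 quot_ge0.
Qed.

End WeightSequence.

Definition SV_factor {R : realType} (M' M : nat -> R) (s j : nat) : R :=
  j%:R^-1 * \big[Num.max/0]_(i < j) ((M' j / (s%:R ^+ j * M i)) `^ ((j - i)%:R^-1)).

Lemma SV_factor_ge0 {R : realType} (M' M : nat -> R) s j : 0 <= SV_factor M' M s j.
Proof. by rewrite mulr_ge0 ?invr_ge0 ?bigmax_ge_id. Qed.

Lemma SV_relP {R : realType} (M' M : nat -> R) : SV_rel M' M <->
  exists s : nat, (1 <= s)%N /\ exists C : R, forall j : nat, (1 <= j)%N ->
    ((SV_factor M' M s j)%:E * \sum_(j <= k <oo) ((quot M k)^-1)%:E <= C%:E)%E.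
Proof. by []. Qed.

Lemma SV_factor_root_seq_le {R : realType} {M' M : nat -> R} n s j :
  (forall k, 0 < M' k) -> (forall k, 0 < M k) -> (forall p, M p ^+ 4 <= M (4 * p)) ->
  (0 < n)%N -> (0 < s)%N ->
  n%:R^-1 * SV_factor (root_seq n M') (root_seq (4 * n) M) s j <= SV_factor M' M s (n * j).
Proof.
move=> M'_gt0 M_gt0 M4 n_gt0 s_gt0.
rewrite /SV_factor natrM invfM -mulrA.
apply: ler_wpM2l; first by rewrite invr_ge0.
apply: ler_wpM2l; first by rewrite invr_ge0.
apply: bigmax_le => [|i _]; first exact: bigmax_ge_id.
have ni : (n * i < n * j)%N by rewrite ltn_pmul2l.
apply: le_trans (le_bigmax _ _ (Ordinal ni)); rewrite /= /root_seq.
rewrite -mulnBr -mulnA exprM exprAC.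
by apply: powR_root_ratio_le; rewrite ?exprn_gt0 ?ltr0n ?subn_gt0.
Qed.

Theorem lemma5p2 (R : realType) (M M' : nat -> R) :
  non_quasianalytic M ->
  (forall k, 0 < M' k) ->
  SV_rel M' M ->
  forall n : nat, (1 <= n)%N -> SV_rel (root_seq n M') (root_seq (4 * n) M).
Proof.
move=> [[M0 [M_gt0 [quot_leS _]]] _] M'_gt0 /SV_relP[s [s_ge1 [C SV_M]]] n n_gt0.
apply/SV_relP; exists s; split => //.
exists (SV_factor (root_seq n M') (root_seq (4 * n) M) s 1 + C) => j j_ge1.
set T := SV_factor _ _ s j.
have T_le := SV_factor_root_seq_le n s j M'_gt0 M_gt0 (M_expn_le M0 M_gt0 quot_leS 4) n_gt0 s_ge1.
have tail_ge0 m : (0 <= \sum_(m <= l <oo) ((quot M l)^-1)%:E)%E.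
  by apply: nneseries_ge0 => l _ _; rewrite lee_fin invr_ge0 (quot_ge0 quot_leS).
apply: le_trans (lee_wpmul2l _ (inv_quot_tail_root_seq_le M_gt0 quot_leS n j n_gt0 j_ge1)) _.
  by rewrite lee_fin SV_factor_ge0.
rewrite ge0_muleDr ?lee_fin ?mule_ge0 ?lee_fin ?invr_ge0 //.
rewrite muleA -!EFinM EFinD leeD //.
  rewrite lee_fin; have [j1|_] := eqVneq j 1%N; first by rewrite mulr1 /T j1.
  by rewrite mulr0 SV_factor_ge0.
have nj_ge1 : (0 < n * j)%N by rewrite muln_gt0 n_gt0.
apply: le_trans (SV_M _ nj_ge1); apply: lee_wpmul2r => //.
by rewrite lee_fin mulrC.
Qed.
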